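(* Every 4-regular graph with girth 5 has a strong edge-coloring using at most 22 colors.
   Context: A strong edge-coloring of a graph is a proper edge-coloring in which, in addition, no two edges of the same color lie on a common path of length three. The girth of a graph is the length of its shortest cycle (a loop counts as a cycle of length 1 and a pair of parallel edges as a cycle of length 2). *)

From mathcomp Require Import all_boot.
Set Implicit Arguments. Unset Strict Implicit. Unset Printing Implicit Defensive.

Definition simple_graph (T : finType) (e : rel T) : Prop :=
  symmetric e /\ irreflexive e.

Definition regular (T : finType) (e : rel T) (d : nat) : Prop :=
  forall v : T, #|[set w | e v w]| = d.

Definition is_graph_cycle (T : finType) (e : rel T) (s : seq T) : bool :=
  [&& 3 <= size s, uniq s & cycle e s].

Definition has_girth (T : finType) (e : rel T) (g : nat) : Prop :=
  (exists s : seq T, is_graph_cycle e s /\ size s = g) /\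
  (forall s : seq T, is_graph_cycle e s -> g <= size s).

(* An edge {u,v} is represented by the 2-set [set u; v]; a colouring with
   k colours assigns a colour in 'I_k to each such set. *)
Definition strong_edge_coloring (T : finType) (e : rel T) (k : nat)
    (c : {set T} -> 'I_k) : Prop :=
  (forall u v w : T, e u v -> e u w -> v != w ->
      c [set u; v] != c [set u; w]) /\
  (* no two edges of the same colour lie on a common path of length 3
     (for the end edges of a path u0 u1 u2 u3; the other pairs of edges
     on such a path are adjacent, covered by properness) *)
  (forall u0 u1 u2 u3 : T, e u0 u1 -> e u1 u2 -> e u2 u3 ->
      uniq [:: u0; u1; u2; u3] -> c [set u0; u1] != c [set u2; u3]).

From mathcomp Require Import all_boot zify.
Set Implicit Arguments. Unset Strict Implicit. Unset Printing Implicit Defensive.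

(* Color greedily in the square of the line graph. An edge of a d-regular graph
   conflicts with at most 2d(d-1) others, so 2d(d-1) - 2 colors suffice as soon as,
   when its turn comes, at least three of its conflicting edges are either still
   uncolored or repeat a color already seen.
   Work in one component, fix an edge rs and color the edges in decreasing order of
   their distance to {r, s}. An edge avoiding r and s has at least three edges at a
   parent of its nearer endpoint still uncolored. Near rs the savings come from a
   precoloring: three pairwise non-conflicting edges hanging off neighbours of r
   get one color, two such edges hanging off neighbours of s another, and all five
   are vertex-disjoint (girth 5 makes room for this choice). Then rs sees five
   edges in two colors, an edge at r sees rs uncolored and three edges of one
   color, and an edge at s sees the other edges at r uncolored. *)

Lemma card_imset_const_on (aT rT : finType) (h : aT -> rT) (S P : {set aT}) :
  P \subset S -> {in P &, forall x y, h x = h y} -> #|h @: S| + #|P| <= #|S| + 1.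
Proof.
move=> PS hP; have hP1 : #|h @: P| <= 1.
  by apply/card_le1_eqP => _ _ /imsetP[x xP ->] /imsetP[y yP ->]; apply: hP.
have : h @: S \subset h @: (S :\: P) :|: h @: P.
  by rewrite -imsetU setUC -{1}(setID S P) (setIidPr PS).
move/subset_leq_card/leq_trans/(_ (leq_card_setU _ _)).
have := leq_imset_card h (S :\: P); rewrite cardsD (setIidPr PS).
have := subset_leq_card PS; lia.
Qed.

Lemma card_bigcup_le (I J : finType) (S : {set I}) (F : I -> {set J}) m :
  (forall i, i \in S -> #|F i| <= m) -> #|\bigcup_(i in S) F i| <= #|S| * m.
Proof.
move=> le_m; rewrite -sum_nat_const.
apply: (big_ind2 (fun (A : {set J}) n => #|A| <= n)) => //; first by rewrite cards0.
by move=> A1 n1 A2 n2 le1 le2; apply: leq_trans (leq_card_setU A1 A2) (leq_add le1 le2).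
Qed.

Lemma pairwise_in (X : eqType) (R : rel X) (s : seq X) :
  symmetric R -> pairwise R s -> {in s &, forall x y, x != y -> R x y}.
Proof.
move=> Rsym; elim: s => //= x s IH /andP[/allP Rx /IH {}IH] y z.
rewrite !inE => /predU1P[->|ys] /predU1P[->|zs]; rewrite ?eqxx // => yz.
- exact: Rx.
- by rewrite Rsym; apply: Rx.
- exact: IH yz.
Qed.

Section ProperColoring.

Variables (I : finType) (conf : rel I) (k : nat).
Hypotheses (conf_sym : symmetric conf) (conf_irr : irreflexive conf).
Implicit Types (X Y A : {set I}) (c : I -> 'I_k).

Definition proper_on c X :=
  forall f g, f \in X -> g \in X -> conf f g -> c f != c g.

Lemma proper_on_subset c X Y : X \subset Y -> proper_on c Y -> proper_on c X.
Proof. by move=> /subsetP XY pc f g /XY fY /XY gY; apply: pc. Qed.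

Lemma proper_on_setU c1 c2 X1 X2 :
  proper_on c1 X1 -> proper_on c2 X2 ->
  (forall f g, f \in X1 -> g \in X2 -> ~~ conf f g) ->
  proper_on (fun g => if g \in X1 then c1 g else c2 g) (X1 :|: X2).
Proof.
move=> pc1 pc2 sep f g; rewrite !inE.
case fX1: (f \in X1); case gX1: (g \in X1) => //= fX2 gX2 fg.
- exact: pc1.
- by move: (sep f g fX1 gX2); rewrite fg.
- by move: (sep g f gX1 fX2); rewrite conf_sym fg.
- exact: pc2.
Qed.

Lemma proper_on_setU1 c X f :
  proper_on c X -> f \notin X -> #|c @: [set g in X | conf f g]| < k ->
  exists c', proper_on c' (f |: X) /\ {in X, c' =1 c}.
Proof.
move=> pc fX seen_lt.
have /subsetPn[i _ i_free] : ~~ ([set: 'I_k] \subset c @: [set g in X | conf f g]).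
  by apply/negP => /subset_leq_card; rewrite cardsT card_ord leqNgt seen_lt.
have neq_f g : g \in X -> (g == f) = false.
  by move=> gX; apply/eqP => gf; rewrite -gf gX in fX.
have i_neq g : g \in X -> conf f g -> i != c g.
  by move=> gX fg; apply: contraNneq i_free => ->; apply: imset_f; rewrite inE gX.
exists (fun g => if g == f then i else c g); split=> [g1 g2|g gX]; last by rewrite neq_f.
rewrite !inE => /predU1P[->|g1X] /predU1P[->|g2X] g12; rewrite ?eqxx ?neq_f //.
- by rewrite conf_irr in g12.
- exact: i_neq.
- by rewrite eq_sym; apply: i_neq; rewrite // conf_sym.
- exact: pc.
Qed.

Lemma greedy_extension c0 X A (rho : I -> nat) :
  proper_on c0 X -> [disjoint X & A] ->
  (forall f, f \in A -> #|c0 @: [set g in X | conf f g]| +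
                        #|[set g in A | conf f g && (rho f <= rho g)]| < k) ->
  exists c, proper_on c (X :|: A) /\ {in X, c =1 c0}.
Proof.
move=> pc0; move: {2}#|A| (leqnn #|A|) => n; elim: n A => [|n IH] A.
  by rewrite leqn0 cards_eq0 => /eqP-> _ _; exists c0; rewrite setU0.
move=> A_le dXA budget; have [->|[f0 f0A]] := set_0Vmem A.
  by exists c0; rewrite setU0.
have [f fA f_min] : exists2 f, f \in A & forall g, g \in A -> rho f <= rho g.
  by have [f fA f_min] := arg_minnP rho f0A; exists f.
have fX : f \notin X by rewrite (disjointFl dXA fA).
have [c' [pc' c'E]] : exists c', proper_on c' (X :|: A :\ f) /\ {in X, c' =1 c0}.
  apply: IH => [|| g /setD1P[_ gA]].
  - by move: A_le; rewrite (cardsD1 f A) fA.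
  - by apply: disjointWr dXA; apply: subsetDl.
  apply: leq_trans (budget g gA); rewrite ltnS leq_add2l subset_leq_card //.
  by apply/subsetP => g'; rewrite !inE => /andP[/andP[_ ->] ->].
have fXA : f \notin X :|: A :\ f by rewrite !inE eqxx /= orbF.
have seen_lt : #|c' @: [set g in X :|: A :\ f | conf f g]| < k.
  apply: leq_ltn_trans (budget f fA); rewrite setIdE setIUl -!setIdE imsetU.
  apply: leq_trans (leq_card_setU _ _) _; apply: leq_add.
    rewrite (@eq_in_imset _ _ c' c0) // => g; rewrite inE => /andP[/c'E //].
  apply: leq_trans (leq_imset_card _ _) _; apply: subset_leq_card.
  by apply/subsetP => g; rewrite !inE => /andP[/andP[_ gA] ->]; rewrite gA f_min.
have [c [pc cE]] := proper_on_setU1 pc' fXA seen_lt.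
exists c; split=> [|g gX]; last by rewrite cE ?c'E // inE gX.
by rewrite -(setD1K fA) setUCA.
Qed.

Lemma card_seen_colors c0 X A (P : pred I) f :
  [disjoint X & A] ->
  #|c0 @: [set g in X | conf f g]| + #|[set g in A | conf f g && P g]| +
    (#|[set g in A | conf f g && ~~ P g]| +
     (#|[set g in X | conf f g]| - #|c0 @: [set g in X | conf f g]|))
  = #|[set g in X :|: A | conf f g]|.
Proof.
move=> dXA; have cardU (B C : {set I}) : [disjoint B & C] -> #|B :|: C| = #|B| + #|C|.
  by move=> dBC; apply/eqP; rewrite (leq_card_setU B C).2.
have -> : [set g in X :|: A | conf f g] =
    [set g in X | conf f g] :|:
    ([set g in A | conf f g && P g] :|: [set g in A | conf f g && ~~ P g]).
  by apply/setP => g; rewrite !inE; case: (g \in X); case: (g \in A); case: (P g); case: conf.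
have dP : [disjoint [set g in A | conf f g && P g] & [set g in A | conf f g && ~~ P g]].
  by rewrite disjoint_subset; apply/subsetP => g; rewrite !inE => /and3P[_ _ ->]; rewrite !andbF.
have dXP : [disjoint [set g in X | conf f g] &
              [set g in A | conf f g && P g] :|: [set g in A | conf f g && ~~ P g]].
  by apply: disjointW dXA; apply/subsetP => g; rewrite !inE;
    [case/andP | case/orP=> /andP[]].
rewrite cardU // cardU //; have := leq_imset_card c0 [set g in X | conf f g]; lia.
Qed.

End ProperColoring.

Section Edges.

Variables (T : finType) (e : rel T).
Implicit Types (x y z u v w : T) (f g : {set T}) (V : {set T}).

Definition is_edge g := [exists x, exists y, e x y && (g == [set x; y])].

Definition conflict f g :=
  (f != g) && [exists x in f, exists y in g, (x == y) || e x y].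

Definition edges_in V := [set g | is_edge g && (g \subset V)].

Definition star v := [set [set v; w] | w in [set w | e v w]].

Lemma is_edgeP g : reflect (exists x y, e x y /\ g = [set x; y]) (is_edge g).
Proof.
apply: (iffP existsP) => [[x /existsP[y /andP[xy /eqP->]]]|[x [y [xy ->]]]].
  by exists x, y.
by exists x; apply/existsP; exists y; rewrite xy eqxx.
Qed.

Lemma is_edge2 x y : e x y -> is_edge [set x; y].
Proof. by move=> xy; apply/is_edgeP; exists x, y. Qed.

Lemma is_edge_neq0 g : is_edge g -> exists x, x \in g.
Proof. by case/is_edgeP => x [y [_ ->]]; exists x; rewrite !inE eqxx. Qed.

Lemma conflictI f g x y :
  f != g -> x \in f -> y \in g -> (x == y) || e x y -> conflict f g.
Proof.
move=> fg xf yg xy; rewrite /conflict fg; apply/existsP; exists x; rewrite xf.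
by apply/existsP; exists y; rewrite yg.
Qed.

Lemma conflictE f g :
  conflict f g -> exists x y, [/\ x \in f, y \in g & (x == y) || e x y].
Proof.
by case/andP => _ /existsP[x /andP[xf /existsP[y /andP[yg xy]]]]; exists x, y.
Qed.

Lemma conflict_irr : irreflexive conflict.
Proof. by move=> f; rewrite /conflict eqxx. Qed.

Definition apart f g := ~~ conflict f g && [disjoint f & g].

Lemma apartI f g :
  (forall x y, x \in f -> y \in g -> (x != y) && ~~ e x y) -> apart f g.
Proof.
move=> fg; apply/andP; split.
  by apply/negP => /conflictE[x [y [xf yg]]]; case/andP: (fg x y xf yg) => /negbTE-> /negbTE->.
apply/pred0P => x /=; apply/negbTE/negP => /andP[xf xg].
by case/andP: (fg x x xf xg); rewrite eqxx.
Qed.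

Lemma mem_star v g : g \in star v -> exists2 w, e v w & g = [set v; w].
Proof. by case/imsetP => w; rewrite inE => vw ->; exists w. Qed.

Lemma star2 v w : e v w -> [set v; w] \in star v.
Proof. by move=> vw; apply/imsetP; exists w; rewrite ?inE. Qed.

Lemma star_edge v g : g \in star v -> is_edge g && (v \in g).
Proof. by case/mem_star => w vw ->; rewrite is_edge2 // !inE eqxx. Qed.

Lemma edge_subset_closed V g x :
  closed e V -> is_edge g -> x \in g -> (g \subset V) = (x \in V).
Proof.
move=> clV /is_edgeP[u [w [uw ->]]] xg; apply/idP/idP => [/subsetP->//|xV].
apply/subsetP => y; move: xg xV; rewrite !inE.
by case/orP=> /eqP-> + /orP[]/eqP->; rewrite ?(clV _ _ uw).
Qed.

Lemma conflict_subset_closed V f g :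
  closed e V -> is_edge f -> is_edge g -> conflict f g -> (f \subset V) = (g \subset V).
Proof.
move=> clV ef eg /conflictE[x [y [xf yg /orP[/eqP xy|xy]]]].
  by rewrite (edge_subset_closed clV ef xf) (edge_subset_closed clV eg yg) xy.
by rewrite (edge_subset_closed clV ef xf) (edge_subset_closed clV eg yg) (clV _ _ xy).
Qed.

Section Symmetric.

Hypothesis sym_e : symmetric e.

Lemma conflictC : symmetric conflict.
Proof.
move=> f g; rewrite /conflict eq_sym; congr (_ && _).
by apply/existsP/existsP => -[x /andP[xf /existsP[y /andP[yg xy]]]];
  exists y; rewrite yg; apply/existsP; exists x; rewrite xf eq_sym sym_e.
Qed.

Lemma apartC : symmetric apart.
Proof. by move=> f g; rewrite /apart conflictC disjoint_sym. Qed.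

Lemma edge_star v g : is_edge g -> v \in g -> g \in star v.
Proof.
case/is_edgeP => x [y [xy ->]]; rewrite !inE => /orP[]/eqP->; first exact: star2.
by rewrite setUC; apply: star2; rewrite sym_e.
Qed.

Lemma proper_on_edges_of_components k (k_gt0 : 0 < k) :
  (forall r, exists c : {set T} -> 'I_k,
     proper_on conflict c (edges_in [set x | connect e r x])) ->
  exists c : {set T} -> 'I_k, proper_on conflict c (edges_in [set: T]).
Proof.
move=> comp; suff: forall n V, #|V| <= n -> closed e V ->
    exists c : {set T} -> 'I_k, proper_on conflict c (edges_in V).
  by apply; [exact: leqnn | move=> x y _; rewrite !inE].
have proper0 : proper_on conflict (fun=> Ordinal k_gt0) (edges_in set0).
  move=> f g; rewrite inE => /andP[/is_edge_neq0[x xf]].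
  by move/subsetP/(_ x xf); rewrite inE.
elim=> [|n IH] V V_le clV.
  by move: V_le; rewrite leqn0 cards_eq0 => /eqP->; exists (fun=> Ordinal k_gt0).
have [->|[r rV]] := set_0Vmem V; first by exists (fun=> Ordinal k_gt0).
pose K := [set x | connect e r x].
have clK : closed e K.
  by move=> x y xy; rewrite !inE; apply: connect_closed xy; apply: sym_connect_sym.
have clV' : closed e (V :\: K).
  by move=> x y xy; rewrite !in_setD (clV _ _ xy) (clK _ _ xy).
have [cV' pV'] : exists c : {set T} -> 'I_k, proper_on conflict c (edges_in (V :\: K)).
  apply: IH clV'; move: V_le; rewrite cardsD.
  have : 0 < #|V :&: K| by apply/card_gt0P; exists r; rewrite !inE rV connect0.
  lia.
have [cK pK] := comp r.
exists (fun g => if g \in edges_in K then cK g else cV' g).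
apply: proper_on_subset (proper_on_setU conflictC pK pV' _).
  apply/subsetP => g; rewrite !inE => /andP[eg gV]; rewrite eg /=.
  have [x xg] := is_edge_neq0 eg.
  rewrite (edge_subset_closed clK eg xg) (edge_subset_closed clV' eg xg) !inE.
  by rewrite (subsetP gV x xg) andbT orbN.
move=> f g; rewrite !inE => /andP[ef fK] /andP[eg gV']; apply/negP => fg.
have [x xg] := is_edge_neq0 eg.
move: (subsetP gV' x xg); rewrite in_setD -(edge_subset_closed clK eg xg).
by rewrite -(conflict_subset_closed clK ef eg fg) fK.
Qed.

End Symmetric.

Lemma strong_edge_coloring_of_proper k (c : {set T} -> 'I_k) :
  irreflexive e -> proper_on conflict c (edges_in [set: T]) -> strong_edge_coloring e c.
Proof.
move=> irr_e pc; have edgeT x y : e x y -> [set x; y] \in edges_in [set: T].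
  by move=> xy; rewrite inE is_edge2 ?subsetT.
split=> [u v w uv uw vw | u0 u1 u2 u3 u01 u12 u23].
  apply: pc; rewrite ?edgeT //; apply: (@conflictI _ _ u u); rewrite ?inE ?eqxx //.
  apply: contraNneq vw => /setP/(_ w); rewrite !inE eqxx orbT.
  by case/orP=> [/eqP uw2|/eqP-> //]; rewrite uw2 irr_e in uw.
rewrite /= !inE !negb_or => /and4P[/and3P[_ u02 u03] _ _ _].
apply: pc; rewrite ?edgeT //; apply: (@conflictI _ _ u1 u2); rewrite ?inE ?eqxx ?u12 ?orbT //.
by apply: contraNneq u02 => /setP/(_ u0); rewrite !inE eqxx (negbTE u03) orbF => <-.
Qed.

End Edges.

Section Regular.

Variables (T : finType) (e : rel T) (d : nat).
Hypotheses (sym_e : symmetric e) (irr_e : irreflexive e) (reg_e : regular e d).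
Implicit Types (x y v w : T) (g : {set T}).

Lemma card_star v : #|star e v| = d.
Proof.
rewrite card_in_imset ?reg_e // => w w'; rewrite !inE => vw vw' /setP/(_ w).
rewrite !inE eqxx orbT => /esym/orP[/eqP vw2|/eqP //].
by rewrite vw2 irr_e in vw.
Qed.

Lemma card_star_del v g : g \in star e v -> #|star e v :\ g| = d.-1.
Proof. by move=> gv; have := cardsD1 g (star e v); rewrite gv card_star => ->. Qed.

Lemma card_conflicts x y :
  e x y -> #|[set g | is_edge e g && conflict e [set x; y] g]| <= (d * d.-1).*2.
Proof.
(* Every edge conflicting with xy lies at a neighbour of x or of y. *)
move=> xy; pose U x := \bigcup_(w in [set w | e x w]) (star e w :\ [set x; w]).
have card_U v : #|U v| <= d * d.-1.
  rewrite -{1}(reg_e v); apply: card_bigcup_le => w; rewrite inE => vw.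
  by rewrite card_star_del // setUC star2 // sym_e.
have in_U v w g : e v w -> is_edge e g -> w \in g -> g != [set v; w] -> g \in U v.
  by move=> vw eg wg gvw; apply/bigcupP; exists w; rewrite ?inE ?gvw ?edge_star.
apply: leq_trans (subset_leq_card (_ : _ \subset U x :|: U y)) _.
  apply/subsetP => g; rewrite !inE => /andP[eg cg].
  have gxy : g != [set x; y] by rewrite eq_sym; case/andP: cg.
  have [xg|xg] := boolP (x \in g); first by rewrite (in_U y x) ?orbT // 1?sym_e // setUC.
  have [yg|yg] := boolP (y \in g); first by rewrite (in_U x y).
  have [p [q [pxy qg /orP[/eqP pq|pq]]]] := conflictE cg.
    by move: pxy; rewrite !inE pq => /orP[]/eqP qE; rewrite -qE qg in xg yg.
  have notin_neq v : v \notin g -> g != [set v; q].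
    by move=> vg; apply: contraNneq vg => ->; rewrite !inE eqxx.
  move: pxy pq; rewrite !inE => /orP[]/eqP-> pq; apply/orP; [left|right];
    by apply: (in_U _ q) => //; apply: notin_neq.
by rewrite -addnn; apply: leq_trans (leq_card_setU _ _) (leq_add _ _).
Qed.

End Regular.

Section GirthFive.

Variables (T : finType) (e : rel T) (d : nat).
Hypotheses (sym_e : symmetric e) (irr_e : irreflexive e) (reg_e : regular e d).
Hypothesis girth_e : forall s : seq T, is_graph_cycle e s -> 5 <= size s.
Implicit Types (x y z u v w a c : T) (f g : {set T}).

Lemma adj_neq x y : e x y -> x != y.
Proof. by apply: contraTneq => ->; rewrite irr_e. Qed.

Lemma no_triangle x y z : e x y -> e y z -> e z x -> False.
Proof.
move=> xy yz zx; have := @girth_e [:: x; y; z].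
have xz : x != z by rewrite eq_sym adj_neq.
by rewrite /is_graph_cycle /= xy yz zx !inE negb_or xz !adj_neq // => /(_ isT).
Qed.

Lemma no_square x y z w :
  e x y -> e y z -> e z w -> e w x -> x != z -> y != w -> False.
Proof.
move=> xy yz zw wx xz yw; have := @girth_e [:: x; y; z; w].
have xw : x != w by rewrite eq_sym adj_neq.
by rewrite /is_graph_cycle /= xy yz zw wx !inE !negb_or xz yw xw !adj_neq // => /(_ isT).
Qed.

Lemma card_common_nbrs x z : x != z -> #|[set y | e x y && e z y]| <= 1.
Proof.
move=> xz; apply/card_le1_eqP => y w; rewrite !inE => /andP[xy zy] /andP[xw zw].
apply/eqP/negPn/negP; rewrite eq_sym => yw.
by apply: (no_square xy _ zw _ xz yw); rewrite sym_e.
Qed.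

Lemma card_nbrs_adj_to v (Y : seq T) :
  v \notin Y -> #|[set x | e v x && has (e x) Y]| <= size Y.
Proof.
elim: Y => [|y Y IH] /=; first by rewrite (eq_card0 (fun x => _)) // => x; rewrite !inE andbF.
rewrite inE negb_or => /andP[vy vY].
apply: leq_trans (subset_leq_card
  (_ : _ \subset [set x | e v x && e y x] :|: [set x | e v x && has (e x) Y])) _.
  apply/subsetP => x; rewrite !inE => /andP[vx /orP[xy|xY]]; last by rewrite vx xY orbT.
  by rewrite vx (sym_e y) xy.
by rewrite -add1n; apply: leq_trans (leq_card_setU _ _) (leq_add (card_common_nbrs vy) (IH vY)).
Qed.

Lemma exists_nbr_avoiding v (X Y : seq T) :
  size X + size Y < d -> v \notin Y ->
  exists x, [/\ e v x, x \notin X & ~~ has (e x) Y].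
Proof.
move=> small vY.
have lt_nbrs : #|[set x | e v x && ((x \in X) || has (e x) Y)]| < #|[set x | e v x]|.
  rewrite reg_e; apply: leq_ltn_trans small.
  apply: leq_trans (subset_leq_card
    (_ : _ \subset [set x in X] :|: [set x | e v x && has (e x) Y])) _.
    by apply/subsetP => x; rewrite !inE => /andP[-> /orP[]->]; rewrite ?orbT.
  apply: leq_trans (leq_card_setU _ _) (leq_add _ (card_nbrs_adj_to vY)).
  by rewrite cardsE card_size.
have /subsetPn[x] : ~~ ([set x | e v x] \subset [set x | e v x && ((x \in X) || has (e x) Y)]).
  by apply/negP => /subset_leq_card; rewrite leqNgt lt_nbrs.
by rewrite !inE => vx; rewrite vx negb_or => /andP[xX xY]; exists x.
Qed.

Definition pendant v u a c := [&& e v a, a != u, e a c & c != v].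

Lemma pendant_edge v u a c : e v u -> pendant v u a c ->
  [&& is_edge e [set a; c], v \notin [set a; c], u \notin [set a; c]
    & [exists x in [set a; c], e v x]].
Proof.
move=> vu /and4P[va au ac cv].
have ua : u != a by rewrite eq_sym.
have vc : v != c by rewrite eq_sym.
have uc : u != c.
  by apply: contraTneq ac => <-; apply/negP => au'; apply: (no_triangle va au'); rewrite sym_e.
have touch : [exists x in [set a; c], e v x] by apply/existsP; exists a; rewrite !inE eqxx.
by rewrite is_edge2 // !inE !negb_or (adj_neq va) vc ua uc.
Qed.

Lemma pendant_apart v u a c a' c' :
  pendant v u a c -> pendant v u a' c' -> a != a' -> ~~ e c c' ->
  apart e [set a; c] [set a'; c'].
Proof.
case/and4P=> va _ ac cv /and4P[va' _ a'c' c'v] aa' cc'.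
have a'v : e a' v by rewrite sym_e.
have vc : v != c by rewrite eq_sym.
have vc' : v != c' by rewrite eq_sym.
have not_aa' : ~~ e a a'.
  by apply/negP => aa'E; apply: (no_triangle va aa'E a'v).
have not_ac' : ~~ e a c'.
  by apply/negP => ac'E; apply: (no_square va ac'E _ a'v vc' aa'); rewrite sym_e.
have not_ca' : ~~ e c a'.
  apply/negP => ca'E; apply: (@no_square v a' c a va' _ _ _ vc); rewrite 1?sym_e //.
  by rewrite eq_sym.
have neq_cc' : c != c'.
  by apply/negP => /eqP cc'E; apply: (no_square va ac _ a'v vc aa'); rewrite cc'E sym_e.
have neq_ac' : a != c' by apply: contraNneq not_aa' => ->; rewrite sym_e.
have neq_ca' : c != a' by apply: contraNneq not_aa' => <-.
apply: apartI => x y; rewrite !inE => /orP[]/eqP-> /orP[]/eqP->;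
  by rewrite ?aa' ?not_aa' ?neq_ac' ?not_ac' ?neq_ca' ?not_ca' ?neq_cc'.
Qed.

Lemma pendant_cross_disjoint r s a c u w :
  e r s -> pendant r s a c -> pendant s r u w -> c != w ->
  [disjoint [set a; c] & [set u; w]].
Proof.
move=> rs /and4P[ra a_s ac _] /and4P[su ur uw _] cw.
have sr : e s r by rewrite sym_e.
have not_au : ~~ e a u.
  by apply/negP => au; apply: (no_square ra au _ sr _ a_s); rewrite 1?sym_e // eq_sym.
have neq_au : a != u.
  by apply/negP => /eqP au; apply: (no_triangle ra _ sr); rewrite au sym_e.
have neq_aw : a != w by apply: contraNneq not_au => ->; rewrite sym_e.
have neq_cu : c != u by apply: contraNneq not_au => <-.
by rewrite disjoints_subset subUset !sub1set !inE !negb_or neq_au neq_aw neq_cu cw.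
Qed.

Section Picking.

Hypothesis d_gt3 : 3 < d.

Let pick v (X Y : seq T) : size X + size Y <= 3 -> v \notin Y ->
  exists x, [/\ e v x, x \notin X & ~~ has (e x) Y].
Proof. by move=> small; apply: exists_nbr_avoiding; apply: leq_ltn_trans small d_gt3. Qed.
Arguments pick : clear implicits.

Let nbr_nbr_neq v x z y : e v x -> e x z -> e v y -> y != z.
Proof. by move=> vx xz vy; apply/eqP => yz; apply: (no_triangle vx xz); rewrite sym_e -yz. Qed.

Lemma exists_pendant_pair s r : e s r ->
  exists b1 d1 b2 d2, [/\ pendant s r b1 d1, pendant s r b2 d2, b1 != b2 & ~~ e d1 d2].
Proof.
move=> sr; have [b1 [sb1 b1X _]] := pick s [:: r] [::] isT isT.
have [b2 [sb2 b2X _]] := pick s [:: r; b1] [::] isT isT.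
have [d1 [b1d1 d1X _]] := pick b1 [:: s] [::] isT isT.
have b2d1 : b2 \notin [:: d1] by rewrite inE (nbr_nbr_neq sb1 b1d1 sb2).
have [d2 [b2d2 d2X d2Y]] := pick b2 [:: s] [:: d1] isT b2d1.
move: b1X b2X d1X d2X d2Y; rewrite /= !inE !negb_or /= andbT => b1r /andP[b2r b2b1] d1s d2s.
rewrite sym_e => nd12; exists b1, d1, b2, d2.
by rewrite /pendant sb1 sb2 b1r b2r b1d1 b2d2 d1s d2s eq_sym b2b1.
Qed.

Lemma exists_pendant_triple r s d1 d2 : e r s -> r != d1 -> r != d2 ->
  exists a1 c1 a2 c2 a3 c3,
  [/\ [&& pendant r s a1 c1, pendant r s a2 c2 & pendant r s a3 c3],
      [&& a1 != a2, a1 != a3 & a2 != a3], [&& ~~ e c1 c2, ~~ e c1 c3 & ~~ e c2 c3]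
    & all (fun c => (c != d1) && (c != d2)) [:: c1; c2; c3]].
Proof.
(* a3 avoids the neighbours of d1 and d2, a2 those of d1, which leaves room for
   choosing c3, c2 and c1 away from d1 and d2. *)
move=> rs rd1 rd2; have rd12 : r \notin [:: d1; d2] by rewrite !inE negb_or rd1 rd2.
have [a3 [ra3 a3X a3Y]] := pick r [:: s] [:: d1; d2] isT rd12.
have rd1' : r \notin [:: d1] by rewrite inE.
have [a2 [ra2 a2X a2Y]] := pick r [:: s; a3] [:: d1] isT rd1'.
have [a1 [ra1 a1X _]] := pick r [:: s; a3; a2] [::] isT isT.
have [c1 [a1c1 c1X _]] := pick a1 [:: r; d1; d2] [::] isT isT.
have a2c1 : a2 \notin [:: c1] by rewrite inE (nbr_nbr_neq ra1 a1c1 ra2).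
have [c2 [a2c2 c2X c2Y]] := pick a2 [:: r; d2] [:: c1] isT a2c1.
have a3c12 : a3 \notin [:: c1; c2].
  by rewrite !inE negb_or (nbr_nbr_neq ra1 a1c1 ra3) (nbr_nbr_neq ra2 a2c2 ra3).
have [c3 [a3c3 c3X c3Y]] := pick a3 [:: r] [:: c1; c2] isT a3c12.
move: a3X a3Y a2X a2Y a1X c1X c2X c2Y c3X c3Y; rewrite /= !inE !negb_or /= !andbT.
move=> a3s /andP[na3d1 na3d2] /andP[a2s a2a3] na2d1 /and3P[a1s a1a3 a1a2] c1X.
move=> /andP[c2r c2d2] nc21 c3r /andP[nc31 nc32].
have nc12 : ~~ e c1 c2 by rewrite sym_e.
have nc13 : ~~ e c1 c3 by rewrite sym_e.
have nc23 : ~~ e c2 c3 by rewrite sym_e.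
have c2d1 : c2 != d1 by apply: contraNneq na2d1 => <-.
have c3d1 : c3 != d1 by apply: contraNneq na3d1 => <-.
have c3d2 : c3 != d2 by apply: contraNneq na3d2 => <-.
exists a1, c1, a2, c2, a3, c3; rewrite /pendant ra1 ra2 ra3 a1c1 a2c2 a3c3.
rewrite a1s a2s a3s c3r c2r (eq_sym a2) (eq_sym a3) a2a3 a1a2 a1a3 nc12 nc13 nc23.
by case/and3P: c1X => -> -> ->; rewrite c2d1 c2d2 c3d1 c3d2.
Qed.

End Picking.

Definition root_packing r s (E0 E1 : seq {set T}) :=
  [/\ (size E0 == 3) && (size E1 == 2),
      all (fun g => is_edge e g && (r \notin g)) (E0 ++ E1),
      all (fun g => [exists x in g, e r x]) E0 && all (fun g => [exists x in g, e s x]) E1,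
      pairwise (apart e) E0 && pairwise (apart e) E1
    & allrel (fun f g => [disjoint f & g]) E0 E1].

Lemma exists_root_packing r s : 3 < d -> e r s -> exists E0 E1, root_packing r s E0 E1.
Proof.
move=> d_gt3 rs; have sr : e s r by rewrite sym_e.
have [b1 [d1 [b2 [d2 [pb1 pb2 b12 nd12]]]]] := exists_pendant_pair d_gt3 sr.
have /and4P[eb1 _ rb1 sb1] := pendant_edge sr pb1.
have /and4P[eb2 _ rb2 sb2] := pendant_edge sr pb2.
have [rd1 rd2] : r != d1 /\ r != d2.
  by move: rb1 rb2; rewrite !inE !negb_or => /andP[_ ->] /andP[_ ->].
have [a1 [c1 [a2 [c2 [a3 [c3 [pa a_neq nc c_d]]]]]]] := exists_pendant_triple d_gt3 rs rd1 rd2.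
case/and3P: pa => pa1 pa2 pa3; case/and3P: a_neq => a12 a13 a23.
case/and3P: nc => nc12 nc13 nc23.
move: c_d; rewrite /= andbT => /and3P[/andP[c1d1 c1d2] /andP[c2d1 c2d2] /andP[c3d1 c3d2]].
have /and4P[ea1 ra1 _ ra1'] := pendant_edge rs pa1.
have /and4P[ea2 ra2 _ ra2'] := pendant_edge rs pa2.
have /and4P[ea3 ra3 _ ra3'] := pendant_edge rs pa3.
exists [:: [set a1; c1]; [set a2; c2]; [set a3; c3]], [:: [set b1; d1]; [set b2; d2]].
split=> //=; rewrite ?andbT.
- by rewrite ea1 ea2 ea3 eb1 eb2 ra1 ra2 ra3 rb1 rb2.
- by rewrite ra1' ra2' ra3' sb1 sb2.
- by rewrite (pendant_apart pa1 pa2) ?(pendant_apart pa1 pa3) ?(pendant_apart pa2 pa3)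
    ?(pendant_apart pb1 pb2).
by rewrite /allrel /= !(pendant_cross_disjoint rs).
Qed.

End GirthFive.

Section Distance.

Variables (T : finType) (e : rel T).
Implicit Types (B : {set T}) (x y r : T).

Fixpoint ball B n : {set T} :=
  if n is m.+1 then ball B m :|: [set y | [exists x in ball B m, e x y]] else B.

Lemma ball_step B n x y : x \in ball B n -> e x y -> y \in ball B n.+1.
Proof. by move=> xn xy; rewrite /= !inE; apply/orP; right; apply/existsP; exists x; rewrite xn. Qed.

Lemma ball_path B n x p : x \in ball B n -> path e x p -> last x p \in ball B (n + size p).
Proof.
elim: p x n => [|y p IH] x n /=; first by rewrite addn0.
by move=> xn /andP[xy yp]; rewrite addnS -addSn; apply: IH yp; apply: ball_step xy.
Qed.

Lemma exists_distance B r : r \in B -> exists h : T -> nat,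
  [/\ forall x, connect e r x -> h x = 0 -> x \in B,
      forall x y, connect e r x -> e x y -> h y <= (h x).+1
    & forall x, connect e r x -> 0 < h x -> exists2 x', e x' x & h x' < h x].
Proof.
(* Vertices outside the component of r get the junk distance 0. *)
move=> rB; have hex x : exists n, (x \in ball B n) || ~~ connect e r x.
  case: (boolP (connect e r x)) => [/connectP[p rp ->]|]; last by exists 0; rewrite orbT.
  by exists (0 + size p); rewrite ball_path.
pose h x := ex_minn (hex x).
have h_min x n : x \in ball B n -> h x <= n.
  by move=> xn; rewrite /h; case: ex_minnP => m _; apply; rewrite xn.
have h_ball x : connect e r x -> x \in ball B (h x).
  by move=> rx; rewrite /h; case: ex_minnP => m; rewrite rx orbF.
exists h; split=> [x /h_ball + h0 | x y /h_ball xh xy | x /h_ball].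
- by rewrite h0.
- exact/h_min/(ball_step xh xy).
case: (h x) (h_min x) => // n hx_min /= + _; rewrite !inE.
case/orP=> [/hx_min|/existsP[x' /andP[x'n x'x]]]; first by rewrite ltnn.
by exists x' => //; rewrite ltnS h_min.
Qed.

End Distance.

Section RootedColoring.

Variables (T : finType) (e : rel T) (d k : nat).
Hypotheses (sym_e : symmetric e) (irr_e : irreflexive e) (reg_e : regular e d).
Hypotheses (d_gt3 : 3 < d) (k_large : (d * d.-1).*2 <= k + 2).
Variables (r s : T) (E0 E1 : seq {set T}) (h : T -> nat).
Hypotheses (rs : e r s) (packing : root_packing e r s E0 E1).
Hypothesis h0 : forall x, connect e r x -> h x = 0 -> x \in [set r; s].
Hypothesis h_lip : forall x y, connect e r x -> e x y -> h y <= (h x).+1.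
Hypothesis h_parent :
  forall x, connect e r x -> 0 < h x -> exists2 x', e x' x & h x' < h x.
Implicit Types (x y u v w : T) (f g : {set T}).

Let K := [set x | connect e r x].
Let D := [set g in E0 ++ E1].
Let A := edges_in e K :\: D.

Let K_closed : closed e K.
Proof. by move=> x y xy; rewrite !inE; apply: connect_closed xy; apply: sym_connect_sym. Qed.

Let edge_in_K g x : is_edge e g -> x \in g -> x \in K -> g \in edges_in e K.
Proof. by move=> eg xg xK; rewrite inE eg (edge_subset_closed K_closed eg xg). Qed.

Lemma E0_touch g : g \in E0 -> exists2 x, x \in g & e r x.
Proof.
by have [_ _ /andP[/allP E0r _] _ _] := packing => /E0r/existsP[x /andP[]]; exists x.
Qed.

Lemma D_touch g : g \in D -> exists2 x, x \in g & e r x || e s x.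
Proof.
have [_ _ /andP[_ /allP E1s] _ _] := packing; rewrite inE mem_cat.
case/orP=> [/E0_touch[x xg rx] | /E1s/existsP[x /andP[xg sx]]];
  by exists x; rewrite ?rx ?sx ?orbT.
Qed.

Lemma D_edge g : g \in D -> [/\ is_edge e g, r \notin g & g \in edges_in e K].
Proof.
have [_ /allP Eedge _ _ _] := packing.
move=> gD; have /andP[eg rg] : is_edge e g && (r \notin g) by apply: Eedge; move: gD; rewrite inE.
split=> //.
have rK : r \in K by rewrite inE connect0.
have sK : s \in K by rewrite -(K_closed rs).
have [x xg /orP[] vx] := D_touch gD; apply: (edge_in_K eg xg); by rewrite -(K_closed vx).
Qed.

Let pairwise_disjoint_D : pairwise (fun f g => [disjoint f & g]) (E0 ++ E1).
Proof.
have [_ _ _ /andP[apart0 apart1] cross] := packing.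
have apart_disj : subrel (apart e) (fun f g : {set T} => [disjoint f & g]).
  by move=> f g /andP[].
by rewrite pairwise_cat cross !(sub_pairwise apart_disj).
Qed.

Lemma D_disjoint : {in D &, forall f g, f != g -> [disjoint f & g]}.
Proof.
move=> f g; rewrite !inE; apply: (@pairwise_in _ (fun f g => [disjoint f & g])).
  by move=> ? ?; apply: disjoint_sym.
exact: pairwise_disjoint_D.
Qed.

Lemma uniq_D : uniq (E0 ++ E1).
Proof.
rewrite uniq_pairwise; apply: (sub_in_pairwise (P := is_edge e) _ _ pairwise_disjoint_D).
  move=> f g ef _ dfg; apply: contraTneq dfg => <-; have [x xf] := is_edge_neq0 ef.
  by apply/negP => /disjointFr/(_ xf); rewrite xf.
apply/allP => g gE; have gD : g \in D by rewrite inE.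
by case: (D_edge gD).
Qed.

Lemma card_D : #|D| = 5.
Proof.
rewrite cardsE (card_uniqP uniq_D) size_cat.
by have [/andP[/eqP-> /eqP->] _ _ _ _] := packing.
Qed.

Lemma card_E0 : #|[set g in E0]| = 3.
Proof.
have := uniq_D; rewrite cat_uniq => /and3P[uE0 _ _].
by rewrite cardsE (card_uniqP uE0); have [/andP[/eqP-> _] _ _ _ _] := packing.
Qed.

Let k_gt1 : 1 < k.
Proof. have : 4 * 3 <= d * d.-1 by apply: leq_mul; lia. lia. Qed.

Let c0 g : 'I_k := if g \in E0 then Ordinal (ltnW k_gt1) else Ordinal k_gt1.

Lemma c0_proper : proper_on (conflict e) c0 D.
Proof.
have [_ _ _ /andP[apart0 apart1] _] := packing.
move=> f g fD gD fg; have fneg : f != g by apply: contraTneq fg => ->; rewrite conflict_irr.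
have no_apart E : pairwise (apart e) E -> f \in E -> g \in E -> False.
  move=> apartE fE gE; case/andP: (pairwise_in (apartC sym_e) apartE fE gE fneg).
  by rewrite fg.
rewrite /c0; case: ifP => fE0; case: ifP => gE0 //; first by case: (no_apart _ apart0 fE0 gE0).
by case: (no_apart _ apart1); [move: fD | move: gD]; rewrite inE mem_cat ?fE0 ?gE0.
Qed.

Lemma card_star_notD v : d.-1 <= #|star e v :\: D|.
Proof.
rewrite cardsD (card_star irr_e reg_e); suff : #|star e v :&: D| <= 1 by lia.
apply/card_le1_eqP => f g; rewrite !in_setI => /andP[fv fD] /andP[gv gD].
have /andP[_ vf] := star_edge fv; have /andP[_ vg] := star_edge gv.
apply/eqP/negPn/negP; rewrite eq_sym => fg.
by move: (D_disjoint fD gD fg) => /disjointFr/(_ vf); rewrite vg.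
Qed.

Lemma star_notD_sub v : v \in K -> star e v :\: D \subset A.
Proof.
move=> vK; apply/subsetP => g; rewrite !inE => /andP[gD gv]; rewrite gD /=.
by case/andP: (star_edge gv) => eg vg; move: (edge_in_K eg vg vK); rewrite inE.
Qed.

(* greedy_extension colors the edges of smallest rho last. *)
Let rho g :=
  if g == [set r; s] then 0 else if r \in g then 1 else if s \in g then 2
  else (\sum_(x in g) h x).+2.

Lemma rho_set2_le u w : u != w -> rho [set u; w] <= h u + h w + 2.
Proof.
move=> uw; rewrite /rho big_setU1 /= ?inE //; rewrite big_set1 addn2.
by case: ifP => // _; case: ifP => // _; case: ifP.
Qed.

Lemma rho_set2 u w : u != w -> r \notin [set u; w] -> s \notin [set u; w] ->
  rho [set u; w] = h u + h w + 2.
Proof.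
move=> uw ruw suw; rewrite /rho (negbTE ruw) (negbTE suw) big_setU1 /= ?inE //.
rewrite big_set1 addn2.
by case: eqP => // uwrs; rewrite uwrs !inE eqxx in ruw.
Qed.

Let ND f := [set g in D | conflict e f g].
Let earlier f := [set g in A | conflict e f g && ~~ (rho f <= rho g)].

Lemma earlier_star f v : v \in K ->
  (forall g, g \in star e v -> conflict e f g && (rho g < rho f)) -> d.-1 <= #|earlier f|.
Proof.
move=> vK fv; apply: leq_trans (card_star_notD v) (subset_leq_card _).
apply/subsetP => g gvD; have := gvD; rewrite in_setD => /andP[_ gv].
rewrite inE (subsetP (star_notD_sub vK)) //=.
by rewrite -ltnNge; apply: fv.
Qed.

Lemma rs_in_A : [set r; s] \in A.
Proof.
have rsD : [set r; s] \notin D.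
  by apply/negP => /D_edge[_ rrs _]; move: rrs; rewrite !inE eqxx.
have rrs : r \in [set r; s] by rewrite !inE eqxx.
have rK : r \in K by rewrite inE connect0.
by rewrite in_setD rsD (edge_in_K (is_edge2 rs) rrs rK).
Qed.

Lemma disjoint_DA : [disjoint D & A].
Proof. by rewrite disjoint_sym disjoint_subset; apply/subsetP => g; rewrite !inE => /andP[]. Qed.

Lemma saving_rs : 3 <= #|ND [set r; s]| - #|c0 @: ND [set r; s]|.
Proof.
have -> : ND [set r; s] = D.
  apply/setP => g; rewrite inE; apply: andb_idr => gD.
  have [_ rg _] := D_edge gD; have rsg : [set r; s] != g.
    by apply: contraNneq rg => <-; rewrite !inE eqxx.
  have [x xg /orP[] vx] := D_touch gD.
    by apply: (conflictI (x := r) rsg _ xg); rewrite ?vx ?orbT // !inE eqxx.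
  by apply: (conflictI (x := s) rsg _ xg); rewrite ?vx ?orbT // !inE eqxx orbT.
have le2 : #|c0 @: D| <= 2.
  apply: leq_trans (_ : #|[set Ordinal (ltnW k_gt1); Ordinal k_gt1]| <= 2); last first.
    by rewrite cards2; case: (_ != _).
  apply/subset_leq_card/subsetP => _ /imsetP[g _ ->]; rewrite /c0 !inE.
  by case: ifP; rewrite eqxx ?orbT.
by rewrite card_D; lia.
Qed.

Lemma saving_r f : f \in A -> r \in f -> f != [set r; s] ->
  3 <= #|earlier f| + (#|ND f| - #|c0 @: ND f|).
Proof.
move=> fA rf frs.
have rs_earlier : [set r; s] \in earlier f.
  rewrite inE rs_in_A (conflictI (x := r) (y := r) frs) ?inE ?eqxx //=.
  by rewrite /rho (negbTE frs) rf eqxx.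
have E0_ND : [set g in E0] \subset ND f.
  apply/subsetP => g; rewrite inE => gE0; have gD : g \in D by rewrite inE mem_cat gE0.
  have [_ rg _] := D_edge gD; have [x xg rx] := E0_touch gE0.
  rewrite inE gD (conflictI (x := r) _ rf xg) ?rx ?orbT //.
  by apply: contraNneq rg => <-.
have c0_E0 : {in [set g in E0] &, forall g g', c0 g = c0 g'}.
  by move=> g g'; rewrite !inE /c0 => -> ->.
have := card_imset_const_on E0_ND c0_E0; rewrite card_E0.
have : 0 < #|earlier f| by apply/card_gt0P; exists [set r; s].
have := leq_imset_card c0 (ND f); lia.
Qed.

Lemma saving_s f : f \in A -> r \notin f -> s \in f -> 3 <= #|earlier f|.
Proof.
move=> fA rf sf; apply: leq_trans (earlier_star (v := r) _ _); first by lia.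
  by rewrite inE connect0.
move=> g /mem_star[w rw ->]; have rg : r \in [set r; w] by rewrite !inE eqxx.
have fg : f != [set r; w] by apply: contraNneq rf => ->.
have sr : e s r by rewrite sym_e.
rewrite (conflictI (x := s) (y := r) fg) ?sr ?orbT //=.
have frs : (f == [set r; s]) = false by apply/negbTE; apply: contraNneq rf => ->; rewrite !inE eqxx.
by rewrite /rho frs (negbTE rf) sf rg; case: ifP.
Qed.

Lemma saving_far f : f \in A -> r \notin f -> s \notin f -> 3 <= #|earlier f|.
Proof.
rewrite !inE => /andP[_ /andP[/is_edgeP[x [y [xy ->]]] xyK]] rf sf.
have [u [w [uw fE huw]]] : exists u w, [/\ e u w, [set x; y] = [set u; w] & h u <= h w].
  case: (leqP (h x) (h y)) => hxy; first by exists x, y.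
  by exists y, x; rewrite sym_e setUC ltnW.
rewrite fE in xyK rf sf *.
have uK : connect e r u by move/subsetP/(_ u): xyK; rewrite !inE eqxx => /(_ isT).
have hu : 0 < h u.
  rewrite lt0n; apply: contraNneq rf => /(h0 uK); rewrite !inE => /orP[]/eqP ur.
    by rewrite ur eqxx.
  by move: sf; rewrite ur !inE eqxx.
have [u' u'u hu'] := h_parent uK hu.
have u'K : connect e r u' by apply: connect_trans uK (connect1 _); rewrite sym_e.
apply: leq_trans (earlier_star (v := u') _ _); first by lia.
  by rewrite inE.
move=> g /mem_star[z u'z ->].
have u'f : u' \notin [set u; w].
  rewrite !inE negb_or (adj_neq irr_e u'u) /=.
  by apply: contraTneq hu' => ->; rewrite -leqNgt.
have fg : [set u; w] != [set u'; z] by apply: contraNneq u'f => ->; rewrite !inE eqxx.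
have uu' : e u u' by rewrite sym_e.
rewrite (conflictI (x := u) (y := u') fg) ?inE ?eqxx ?uu' ?orbT //=.
rewrite (rho_set2 (adj_neq irr_e uw) rf sf).
apply: leq_ltn_trans (rho_set2_le (adj_neq irr_e u'z)) _; rewrite ltn_add2r.
apply: leq_ltn_trans (leq_add (leqnn _) (h_lip u'K u'z)) _.
by rewrite addnS -addSn -addnS leq_add // (leq_trans hu' huw).
Qed.

Lemma savings f : f \in A -> 3 <= #|earlier f| + (#|ND f| - #|c0 @: ND f|).
Proof.
move=> fA; have [->|frs] := eqVneq f [set r; s]; first by have := saving_rs; lia.
have [rf|rf] := boolP (r \in f); first exact: saving_r.
have [sf|sf] := boolP (s \in f); first by have := saving_s fA rf sf; lia.
by have := saving_far fA rf sf; lia.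
Qed.

Lemma colors_seen_lt f : f \in A ->
  #|c0 @: ND f| + #|[set g in A | conflict e f g && (rho f <= rho g)]| < k.
Proof.
move=> fA; have := card_seen_colors (conflict e) c0 (fun g => rho f <= rho g) f disjoint_DA.
have := savings fA; rewrite /earlier /ND.
have [x [y [xy fE]]] : exists x y, e x y /\ f = [set x; y].
  by apply/is_edgeP; move: fA; rewrite !inE => /and3P[].
have : #|[set g in D :|: A | conflict e f g]| <= (d * d.-1).*2.
  apply: leq_trans (card_conflicts sym_e irr_e reg_e xy); rewrite -fE.
  apply/subset_leq_card/subsetP => g; rewrite !in_set => /andP[gDA ->]; rewrite andbT.
  case/orP: gDA => [gE | /and3P[] //]; have gD : g \in D by rewrite inE.
  by case: (D_edge gD).
lia.
Qed.

Lemma proper_on_rooted_component : exists c : {set T} -> 'I_k,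
  proper_on (conflict e) c (edges_in e [set x | connect e r x]).
Proof.
have [c [pc _]] := greedy_extension (conflictC sym_e) (@conflict_irr _ e) c0_proper
  disjoint_DA colors_seen_lt.
exists c; apply: proper_on_subset pc; apply/subsetP => g gK.
by rewrite inE; case: (boolP (g \in D)) => //= gD; rewrite inE gD.
Qed.

End RootedColoring.

Theorem strong_edge_coloring_regular_girth5 (T : finType) (e : rel T) (d k : nat) :
  simple_graph e -> regular e d -> (forall s, is_graph_cycle e s -> 5 <= size s) ->
  3 < d -> (d * d.-1).*2 <= k + 2 ->
  exists c : {set T} -> 'I_k, strong_edge_coloring e c.
Proof.
move=> [sym_e irr_e] reg_e girth_e d_gt3 k_large.
have k_gt0 : 0 < k.
  have : 4 * 3 <= d * d.-1 by apply: leq_mul; lia.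
  lia.
suff [c pc] : exists c : {set T} -> 'I_k, proper_on (conflict e) c (edges_in e [set: T]).
  by exists c; apply: strong_edge_coloring_of_proper.
apply: (proper_on_edges_of_components sym_e k_gt0) => r.
have [s] : exists s, s \in [set w | e r w] by apply/card_gt0P; rewrite reg_e; lia.
rewrite inE => rs; have [E0 [E1 packing]] := exists_root_packing sym_e irr_e reg_e girth_e d_gt3 rs.
have rrs : r \in [set r; s] by rewrite !inE eqxx.
have [h [h0 h_lip h_parent]] := exists_distance e rrs.
exact: (proper_on_rooted_component sym_e irr_e reg_e d_gt3 k_large rs packing h0 h_lip h_parent).
Qed.

Theorem lemma8 (T : finType) (e : rel T) :
  simple_graph e -> regular e 4 -> has_girth e 5 ->
  exists c : {set T} -> 'I_22, strong_edge_coloring e c.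
Proof.
move=> simple_e reg_e [_ girth_e].
exact: strong_edge_coloring_regular_girth5 simple_e reg_e girth_e _ _.
Qed.
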